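(* Let $G$ be a graph on vertex set $[n]$ with Laplacian matrix $L$, let $k\ge2$ be an integer, let $J$ be the $n\times n$ all-ones matrix and $e\in\mathbb R^n$ the all-ones vector. Define $MkC_v(G)=\max\{\tfrac12\langle L,Z\rangle: Z,X\in\mathbb S^n,\ X_{ii}=0,\ Z_{ii}=1\ (i\in[n]),\ Z\ge0,\ X\ge0,\ Z-X\succeq0,\ Z+(k-1)X-J\succeq0\}$ and $MkC_m(G)=\max\{\tfrac12\langle L,Z\rangle: Z\in\mathbb S^n,\ Z_{ii}=1\ (i\in[n]),\ Z\ge0,\ Z-\tfrac1kJ\succeq0\}$; and define $Ek_v(G)$ and $Ek_m(G)$ as the corresponding minima of $\tfrac12\langle L,Z\rangle$ over the same feasible sets, each with the additional constraint $Ze=\tfrac nk e$. Then $MkC_v(G)=MkC_m(G)$ and $Ek_v(G)=Ek_m(G)$; more precisely, for each of the two pairs, every feasible solution of one problem yields a feasible solution of the other with the same objective value.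
   Context: $\mathbb S^n$ denotes real symmetric $n\times n$ matrices; $\langle A,B\rangle=\mathrm{trace}(AB)$; $\ge0$ entrywise nonnegativity; $\succeq0$ positive semidefiniteness. The Laplacian of $G$ is $L=D-A$ with $A$ the adjacency matrix and $D$ the diagonal degree matrix. *)

From HB Require Import structures.
From mathcomp Require Import all_boot all_order all_algebra.
From mathcomp Require Import reals.
Set Implicit Arguments. Unset Strict Implicit. Unset Printing Implicit Defensive.
Import Order.TTheory GRing.Theory Num.Theory.
Local Open Scope ring_scope.

Definition simple_graph (n : nat) (g : rel 'I_n) : Prop :=
  (forall i j, g i j = g j i) /\ (forall i, ~~ g i i).

Section Defs.
Variable R : realType.

Definition adjacency (n : nat) (g : rel 'I_n) : 'M[R]_n :=
  \matrix_(i, j) (g i j)%:R.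

Definition degree_mx (n : nat) (g : rel 'I_n) : 'M[R]_n :=
  diag_mx (\row_i (\sum_j (g i j)%:R)).

Definition laplacian (n : nat) (g : rel 'I_n) : 'M[R]_n :=
  degree_mx g - adjacency g.

Definition frob (n : nat) (A B : 'M[R]_n) : R := \tr (A *m B).

Definition symmetric (n : nat) (A : 'M[R]_n) : Prop := A^T = A.

Definition psd (n : nat) (A : 'M[R]_n) : Prop :=
  forall v : 'cV[R]_n, 0 <= ((v^T *m A *m v) 0 0).

Definition nonneg_mx (n : nat) (A : 'M[R]_n) : Prop := forall i j, 0 <= A i j.

Definition Jmx (n : nat) : 'M[R]_n := const_mx 1.
Definition evec (n : nat) : 'cV[R]_n := const_mx 1.

Definition obj (n : nat) (g : rel 'I_n) (Z : 'M[R]_n) : R :=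
  (frob (laplacian g) Z) / 2.

Definition feas_v (n k : nat) (Z X : 'M[R]_n) : Prop :=
  symmetric Z /\ symmetric X /\
  (forall i, X i i = 0) /\ (forall i, Z i i = 1) /\
  nonneg_mx Z /\ nonneg_mx X /\
  psd (Z - X) /\ psd (Z + (k.-1)%:R *: X - Jmx n).

Definition feas_m (n k : nat) (Z : 'M[R]_n) : Prop :=
  symmetric Z /\ (forall i, Z i i = 1) /\ nonneg_mx Z /\
  psd (Z - (k%:R)^-1 *: Jmx n).

Definition equip (n k : nat) (Z : 'M[R]_n) : Prop :=
  Z *m evec n = (n%:R / k%:R) *: evec n.

End Defs.

From Pilot Require Import Defs.
From HB Require Import structures.
From mathcomp Require Import all_boot all_order all_algebra.
From mathcomp Require Import reals.
From mathcomp Require Import ring lra.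
Set Implicit Arguments. Unset Strict Implicit. Unset Printing Implicit Defensive.
Import Order.TTheory GRing.Theory Num.Theory.
Local Open Scope ring_scope.

(* Both relaxations have the same Z: a vector-lifting solution (Z, X) gives
   Z - J/k = ((k-1)/k) (Z - X) + (1/k) (Z + (k-1) X - J), a nonnegative
   combination of positive semidefinite matrices; conversely, for a matrix
   solution Z one takes X = (J - Z)/(k-1), which makes Z + (k-1) X - J = 0
   and Z - X = (k/(k-1)) (Z - J/k).  X is nonnegative because testing
   Z - J/k against e_i - e_j forces Z_ij <= 1.  The objective and the
   constraint Z e = (n/k) e only involve Z, so they are preserved. *)

Section Psd.
Variables (R : realType) (n : nat).
Implicit Types (A B : 'M[R]_n) (a : R).

Lemma psd0 : psd (0 : 'M[R]_n).
Proof. by move=> v; rewrite mulmx0 mul0mx mxE. Qed.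

Lemma psdD A B : psd A -> psd B -> psd (A + B).
Proof. by move=> pA pB v; rewrite mulmxDr mulmxDl mxE addr_ge0. Qed.

Lemma psdZ a A : 0 <= a -> psd A -> psd (a *: A).
Proof. by move=> a0 pA v; rewrite -scalemxAr -scalemxAl mxE mulr_ge0. Qed.

Lemma delta_mx_form A i j :
  (delta_mx i 0)^T *m A *m delta_mx j 0 = (A i j)%:M :> 'M_1.
Proof. by rewrite trmx_delta -rowE -colE; apply/matrixP=> ? ?; rewrite !ord1 !mxE. Qed.

Lemma psd_offdiag_le A i j : psd A -> A i j + A j i <= A i i + A j j.
Proof.
move=> /(_ (delta_mx i 0 - delta_mx j 0)).
rewrite (linearB (@trmx R n 1)) /= !mulmxBl !mulmxBr !delta_mx_form.
by rewrite -!raddfB /= mxE mulr1n; lra.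
Qed.

End Psd.

Section Relaxations.
Variables (R : realType) (n k : nat).
Implicit Types Z X : 'M[R]_n.

Lemma feas_v_feas_m Z X : (0 < k)%N -> feas_v k Z X -> feas_m k Z.
Proof.
move=> k_gt0 [sZ [_ [_ [dZ [nZ [_ [psd_ZX psd_ZXJ]]]]]]]; do 3!split => //.
have kE : k%:R = (k.-1)%:R + 1 :> R by rewrite natr1 prednK.
have k_neq0 : k%:R != 0 :> R by rewrite pnatr_eq0 -lt0n.
have -> : Z - k%:R^-1 *: Jmx R n =
    (k%:R^-1 * (k.-1)%:R) *: (Z - X) + k%:R^-1 *: (Z + (k.-1)%:R *: X - Jmx R n).
  by apply/matrixP => i j; rewrite !mxE kE; field; rewrite -kE.
by apply: psdD; apply: psdZ => //; rewrite ?mulr_ge0 ?invr_ge0 ?ler0n.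
Qed.

Lemma feas_m_le1 Z i j : feas_m k Z -> Z i j <= 1.
Proof.
move=> [sZ [dZ [_ /(psd_offdiag_le i j)]]].
have Zji : Z j i = Z i j by rewrite -[in RHS]sZ mxE.
by rewrite !mxE !dZ Zji; lra.
Qed.

Lemma feas_m_feas_v Z : (1 < k)%N -> feas_m k Z ->
  feas_v k Z ((k.-1)%:R^-1 *: (Jmx R n - Z)).
Proof.
move=> k_gt1 feasZ; have [sZ [dZ [nZ psd_ZJ]]] := feasZ.
have m_gt0 : 0 < (k.-1)%:R :> R by rewrite ltr0n -ltnS prednK // ltnW.
have kE : k%:R = (k.-1)%:R + 1 :> R by rewrite natr1 prednK // ltnW.
have m_neq0 := lt0r_neq0 m_gt0.
split=> //; split; first by rewrite /Defs.symmetric linearZ linearB /= sZ trmx_const.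
split; first by move=> i; rewrite !mxE dZ subrr mulr0.
do 3!split => //.
  by move=> i j; rewrite !mxE mulr_ge0 ?invr_ge0 ?ler0n ?subr_ge0 ?feas_m_le1.
split.
  have -> : Z - (k.-1)%:R^-1 *: (Jmx R n - Z) =
      (k%:R / (k.-1)%:R) *: (Z - k%:R^-1 *: Jmx R n).
    apply/matrixP => i j; rewrite !mxE kE; field.
    by rewrite m_neq0 -kE pnatr_eq0 -lt0n (ltn_trans _ k_gt1).
  by apply: psdZ => //; rewrite divr_ge0 ?ler0n.
have -> : Z + (k.-1)%:R *: ((k.-1)%:R^-1 *: (Jmx R n - Z)) - Jmx R n = 0.
  by rewrite scalerA mulfV // scale1r subrKC subrr.
exact: psd0.
Qed.

End Relaxations.

Theorem mainTheorem11 (R : realType) (n : nat) (g : rel 'I_n) (k : nat) :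
  simple_graph g -> (2 <= k)%N ->
  (* MkC_v vs MkC_m: feasible solutions correspond with equal objective *)
  ((forall Z X : 'M[R]_n, feas_v k Z X ->
      exists Z' : 'M[R]_n, feas_m k Z' /\ obj g Z' = obj g Z) /\
   (forall Z : 'M[R]_n, feas_m k Z ->
      exists Z' X' : 'M[R]_n, feas_v k Z' X' /\ obj g Z' = obj g Z)) /\
  (* Ek_v vs Ek_m: same, with the extra constraint Z e = (n/k) e *)
  ((forall Z X : 'M[R]_n, feas_v k Z X -> equip k Z ->
      exists Z' : 'M[R]_n, (feas_m k Z' /\ equip k Z') /\ obj g Z' = obj g Z) /\
   (forall Z : 'M[R]_n, feas_m k Z -> equip k Z ->
      exists Z' X' : 'M[R]_n, (feas_v k Z' X' /\ equip k Z') /\ obj g Z' = obj g Z)).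
Proof.
move=> _ k_gt1; have k_gt0 := ltnW k_gt1.
split; split.
- by move=> Z X feasZX; exists Z; split=> //; exact: feas_v_feas_m feasZX.
- by move=> Z feasZ; exists Z; eexists; split; first exact: feas_m_feas_v.
- by move=> Z X feasZX eqZ; exists Z; do 2!split=> //; exact: feas_v_feas_m feasZX.
- by move=> Z feasZ eqZ; exists Z; eexists; split; first split; first exact: feas_m_feas_v.
Qed.
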